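(* Let $K\ge 2$, let $T\ge1$, and let $\mathbf{x}(t)\in[0,1]^K$, $t=1,\dots,T$, be any fixed sequence of reward vectors. Run the algorithm REX3 described in the context with transfer function $\psi$ equal to the identity and parameter $\gamma\in(0,\tfrac12)$. Then $$\mathbb{G}_{max}-\mathbb{E}(\mathbb{G}_{alg})\le \frac{K}{\gamma}\ln(K)+\gamma\tau,\qquad \text{where } \tau=e\cdot\mathbb{E}\mathbb{G}_{alg}-(4-e)\cdot\mathbb{E}\mathbb{G}_{unif}.$$
   Context: Adversarial utility-based dueling bandit setting: there are $K$ arms; before play, an (oblivious) environment fixes a horizon $T$ and reward vectors $\mathbf{x}(t)=(x_1(t),\dots,x_K(t))\in[0,1]^K$ for $t=1,\dots,T$. At each round the learner selects a pair of arms $(a_t,b_t)$ and observes only the relative feedback $\psi(x_{a_t}(t)-x_{b_t}(t))$, here with $\psi(z)=z$. Algorithm REX3 with parameter $\gamma$: initialize $w_i(1)=1$ for all $i$. At each round $t$: set $p_i(t)=(1-\gamma)\frac{w_i(t)}{\sum_{j=1}^K w_j(t)}+\frac{\gamma}{K}$; draw two arms $a_t,b_t$ independently according to $\mathbf{p}(t)=(p_1(t),\dots,p_K(t))$; receive $\psi(x_{a_t}(t)-x_{b_t}(t))$; if $a_t\neq b_t$, set $w_{a_t}(t+1)=w_{a_t}(t)\exp\!\big(\frac{\gamma}{K}\frac{\psi(x_{a_t}-x_{b_t})}{2p_{a_t}(t)}\big)$ and $w_{b_t}(t+1)=w_{b_t}(t)\exp\!\big(-\frac{\gamma}{K}\frac{\psi(x_{a_t}-x_{b_t})}{2p_{b_t}(t)}\big)$;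 other weights unchanged. Notation: $\mathbb{G}_{max}=\max_i\sum_{t=1}^T x_i(t)$ (best single-arm gain); $\mathbb{G}_{alg}=\frac12\sum_{t=1}^T\big(x_{a_t}(t)+x_{b_t}(t)\big)$ (gain of the algorithm); $\mathbb{E}\mathbb{G}_{unif}=\frac1K\sum_{t=1}^T\sum_{i=1}^K x_i(t)$. Expectations are over the algorithm's internal randomization. *)

From HB Require Import structures.
From mathcomp Require Import all_boot all_order all_algebra.
From mathcomp Require Import all_classical all_reals all_analysis.
Set Implicit Arguments. Unset Strict Implicit. Unset Printing Implicit Defensive.
Import Order.TTheory GRing.Theory Num.Theory.
Local Open Scope ring_scope.

(* Rounds are indexed t = 0, ..., T-1 (paper: 1..T).  Arms are 'I_K.
   Reward sequence x : nat -> 'I_K -> R, x t i = x_i(t+1).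
   Transfer function psi = identity. *)

Section REX3.
Variable R : realType.

Definition rex3_p (K : nat) (gamma : R) (w : 'I_K -> R) (i : 'I_K) : R :=
  (1 - gamma) * (w i / \sum_(j < K) w j) + gamma / K%:R.

Definition rex3_update (K : nat) (gamma : R) (xt : 'I_K -> R)
    (w : 'I_K -> R) (a b : 'I_K) : 'I_K -> R :=
  fun i =>
    if a == b then w i
    else if i == a then
      w a * expR (gamma / K%:R * ((xt a - xt b) / (2 * rex3_p gamma w a)))
    else if i == b then
      w b * expR (- (gamma / K%:R * ((xt a - xt b) / (2 * rex3_p gamma w b))))
    else w i.

(* Expected gain (1/2)(x_a(t) + x_b(t)) summed over the n rounds t, ..., t+n-1,
   when the algorithm is in weight state w at round t; the expectation is over
   the independent draws a_t, b_t ~ p(t) at each round. *)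
Fixpoint rex3_EG (K : nat) (gamma : R) (x : nat -> 'I_K -> R)
    (n t : nat) (w : 'I_K -> R) : R :=
  match n with
  | 0 => 0
  | n'.+1 =>
      \sum_(a < K) \sum_(b < K)
        rex3_p gamma w a * rex3_p gamma w b *
        ((x t a + x t b) / 2 + rex3_EG gamma x n' t.+1 (rex3_update gamma (x t) w a b))
  end.

Definition EG_alg (K : nat) (gamma : R) (x : nat -> 'I_K -> R) (T : nat) : R :=
  rex3_EG gamma x T 0 (fun _ => 1).

(* G_max = max_i sum_t x_i(t)  (all sums are >= 0, so 0 is a neutral seed) *)
Definition G_max (K : nat) (x : nat -> 'I_K -> R) (T : nat) : R :=
  \big[Num.max/0]_(i < K) \sum_(t < T) x t i.

Definition EG_unif (K : nat) (x : nat -> 'I_K -> R) (T : nat) : R :=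
  K%:R^-1 * \sum_(t < T) \sum_(i < K) x t i.

End REX3.

From HB Require Import structures.
From mathcomp Require Import all_boot all_order all_algebra.
From mathcomp Require Import all_classical all_reals all_analysis.
From mathcomp Require Import ring lra.
Set Implicit Arguments. Unset Strict Implicit. Unset Printing Implicit Defensive.
Import Order.TTheory GRing.Theory Num.Theory.
Local Open Scope ring_scope.

(* A potential argument for exponential weights.  REX3 multiplies w_i by
   exp (eta * g_i), where g_i is an importance-weighted estimate of
   x_i(t) - E x_a(t) that is unbiased; hence E ln w_j after T rounds is exactly
   eta * (G_j - E G_alg).  For the total weight W, the bound
   exp z <= 1 + z + 5/8 z^2 on |z| <= 1/2 gives
   E ln W(t+1) - ln W(t) <= eta^2 / (1 - gamma) * ((1 + 5/16) K g_t - (1 - 5/16) X_t),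
   with g_t the expected gain of round t and X_t the total reward of round t.
   Comparing ln W with ln w_j gives the regret against arm j; comparing it with
   the mean of the ln w_j (concavity of ln) shows that the second-order term is
   nonnegative, and e >= 2 + 5/8 then turns it into the stated bound. *)

Lemma sumr_pos_gt0 (R : numDomainType) (I : finType) (v : I -> R) :
  (0 < #|I|)%N -> (forall i, 0 < v i) -> 0 < \sum_i v i.
Proof.
case/card_gt0P=> i0 _ v_gt0; apply: (lt_le_trans (v_gt0 i0)).
by rewrite (bigD1 i0) //= lerDl sumr_ge0 // => i _; exact: ltW.
Qed.

Lemma sumr_delta (R : pzSemiRingType) (I : finType) (F : I -> R) (j : I) :
  \sum_i (i == j)%:R * F i = F j.
Proof. by rewrite (bigD1 j) //= eqxx mul1r big1 ?addr0 // => i /negbTE ->; rewrite mul0r. Qed.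

Section RealBounds.
Variable R : realType.

Lemma expR_le_invr1B (y : R) : y < 1 -> expR y <= (1 - y)^-1.
Proof.
move=> y_lt1; have pos1B : 0 < 1 - y by lra.
rewrite -[expR y]invrK -expRN lef_pV2 ?posrE ?expR_gt0 //.
by have := expR_ge1Dx (- y); lra.
Qed.

Lemma expR_le_quad_small (y : R) : `|y| <= 1 / 64 -> expR y <= 1 + y + 51 / 50 * y ^+ 2.
Proof.
rewrite ler_norml => /andP[ylo yhi].
have y_lt1 : y < 1 by lra.
apply: (le_trans (expR_le_invr1B y_lt1)).
rewrite -div1r ler_pdivrMr; last lra.
have : 0 <= y ^+ 2 * (1 / 50 - 51 / 50 * y) by apply: mulr_ge0; [exact: sqr_ge0 | lra].
rewrite expr2; nra.
Qed.

(* Squaring [expR (z / 2) <= 1 + z / 2 + c (z / 2)^2]; the cubic and quartic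
   terms of the square are absorbed using [|z / 2| <= d]. *)
Lemma expR_le_quad_double (d c c' : R) : 0 <= d -> 0 <= c ->
  (1 + 2 * c) / 4 + c * d / 2 + c ^+ 2 * d ^+ 2 / 4 <= c' ->
  (forall y, `|y| <= d -> expR y <= 1 + y + c * y ^+ 2) ->
  forall z, `|z| <= 2 * d -> expR z <= 1 + z + c' * z ^+ 2.
Proof.
move=> d_ge0 c_ge0 c'_ge quad_d z z_le.
set y := z / 2.
have zE : z = y + y by rewrite /y; field.
have y_le : `|y| <= d by rewrite /y normrM [`|_^-1|]ger0_norm ?invr_ge0 //; lra.
have expR_z : expR z <= (1 + y + c * y ^+ 2) ^+ 2.
  rewrite zE expRD expr2; apply: ler_pM; rewrite ?expR_ge0 //; exact: quad_d.
apply: le_trans expR_z _.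
have [ylo yhi] : - d <= y /\ y <= d by move: y_le; rewrite ler_norml => /andP[].
have ysq : 0 <= y ^+ 2 := sqr_ge0 y.
have ysq_le : y ^+ 2 <= d ^+ 2 by rewrite !expr2; nra.
have cube : c * y ^+ 2 * y <= c * y ^+ 2 * d by apply: ler_wpM2l => //; exact: mulr_ge0.
have quart : c ^+ 2 * y ^+ 2 * y ^+ 2 <= c ^+ 2 * d ^+ 2 * y ^+ 2.
  have dy : 0 <= d ^+ 2 - y ^+ 2 by rewrite subr_ge0.
  have := mulr_ge0 (mulr_ge0 (sqr_ge0 c) ysq) dy; lra.
have coef : y ^+ 2 * ((1 + 2 * c) / 4 + c * d / 2 + c ^+ 2 * d ^+ 2 / 4) <= y ^+ 2 * c'.
  exact: ler_wpM2l.
rewrite zE; move: cube quart coef; rewrite !expr2; nra.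
Qed.

(* The constant 5 / 8 only has to satisfy 5 / 8 <= e - 2, as used in [regret_arith]. *)
Lemma expR_le_quad (z : R) : `|z| <= 1 / 2 -> expR z <= 1 + z + 5 / 8 * z ^+ 2.
Proof.
have q32 (y : R) : `|y| <= 1 / 32 -> expR y <= 1 + y + 77 / 100 * y ^+ 2.
  move=> y_le; apply: (@expR_le_quad_double (1 / 64) (51 / 50)) => //; try lra.
  exact: expR_le_quad_small.
have q16 (y : R) : `|y| <= 1 / 16 -> expR y <= 1 + y + 13 / 20 * y ^+ 2.
  by move=> y_le; apply: (@expR_le_quad_double (1 / 32) (77 / 100)) => //; lra.
have q8 (y : R) : `|y| <= 1 / 8 -> expR y <= 1 + y + 3 / 5 * y ^+ 2.
  by move=> y_le; apply: (@expR_le_quad_double (1 / 16) (13 / 20)) => //; lra.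
have q4 (y : R) : `|y| <= 1 / 4 -> expR y <= 1 + y + 59 / 100 * y ^+ 2.
  by move=> y_le; apply: (@expR_le_quad_double (1 / 8) (3 / 5)) => //; lra.
by move=> z_le; apply: (@expR_le_quad_double (1 / 4) (59 / 100)) => //; lra.
Qed.

(* [expR 1 >= (17 / 16) ^+ 16], bounded below through four squarings with
   rounded-down intermediate values. *)
Lemma expR1_ge : 2 + 5 / 8 <= expR (1 : R).
Proof.
have -> : expR (1 : R) = (((expR (1 / 16) ^+ 2) ^+ 2) ^+ 2) ^+ 2.
  by rewrite -!exprM -expRM_natl mul1r divff.
have sq_ge (a b u : R) : 0 <= b -> b <= u -> a <= b * b -> a <= u ^+ 2.
  move=> b_ge0 b_le a_le; apply: le_trans a_le _.
  by rewrite expr2; apply: ler_pM.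
have e16 : 17 / 16 <= expR (1 / 16 : R) by have := expR_ge1Dx (1 / 16 : R); lra.
apply: (sq_ge _ (47 / 29)); [lra | | lra].
apply: (sq_ge _ (121 / 95)); [lra | | lra].
apply: (sq_ge _ (289 / 256)); [lra | | lra].
by apply: (sq_ge _ (17 / 16)); [lra | | lra].
Qed.

Lemma ln_le_subr1 (u : R) : 0 < u -> ln u <= u - 1.
Proof. by move=> u_gt0; have := @le_ln1Dx R (u - 1); rewrite addrCA subrr addr0; apply; lra. Qed.

Lemma sum_ln_le_ln_mean (I : finType) (v : I -> R) : (0 < #|I|)%N ->
  (forall i, 0 < v i) -> \sum_i ln (v i) <= #|I|%:R * ln ((\sum_i v i) / #|I|%:R).
Proof.
move=> I_gt0 v_gt0; set n := #|I|%:R; set S := \sum_i v i.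
have n_gt0 : 0 < n by rewrite ltr0n.
have S_gt0 : 0 < S by exact: sumr_pos_gt0.
have m_gt0 : 0 < S / n by exact: divr_gt0.
have : \sum_i (ln (v i) - ln (S / n)) <= \sum_i (v i / (S / n) - 1).
  apply: ler_sum => i _; rewrite -ln_div ?posrE //; exact/ln_le_subr1/divr_gt0.
have sum_cst (c : R) : \sum_(i : I) c = c * n by rewrite sumr_const mulr_natr.
rewrite !sumrB -mulr_suml -/S !sum_cst invf_div mulrCA divff ?mulr1 ?gt_eqF //.
by rewrite mul1r mulrC; lra.
Qed.

End RealBounds.

Section PairExpectation.
Variables (R : realFieldType) (I : finType) (q : I -> R).

Definition Epair (f : I -> I -> R) : R := \sum_a \sum_b q a * q b * f a b.

Lemma EpairD (f g : I -> I -> R) :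
  Epair (fun a b => f a b + g a b) = Epair f + Epair g.
Proof.
rewrite /Epair -big_split; apply: eq_bigr => a _.
by rewrite -big_split; apply: eq_bigr => b _; rewrite mulrDr.
Qed.

Lemma EpairZ (k : R) (f : I -> I -> R) : Epair (fun a b => k * f a b) = k * Epair f.
Proof.
rewrite /Epair big_distrr; apply: eq_bigr => a _.
by rewrite big_distrr; apply: eq_bigr => b _; rewrite mulrCA.
Qed.

Lemma EpairB (f g : I -> I -> R) :
  Epair (fun a b => f a b - g a b) = Epair f - Epair g.
Proof.
rewrite /Epair -sumrB; apply: eq_bigr => a _.
by rewrite -sumrB; apply: eq_bigr => b _; rewrite mulrBr.
Qed.

Lemma Epair_sum (J : finType) (F : J -> I -> I -> R) :
  Epair (fun a b => \sum_j F j a b) = \sum_j Epair (F j).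
Proof.
rewrite /Epair [RHS]exchange_big; apply: eq_bigr => a _ /=.
by rewrite [RHS]exchange_big; apply: eq_bigr => b _ /=; rewrite big_distrr.
Qed.

Lemma Epair_delta_fst (j : I) (h : I -> I -> R) :
  Epair (fun a b => (j == a)%:R * h a b) = q j * \sum_b q b * h j b.
Proof.
rewrite /Epair (bigD1 j) //= [X in _ + X]big1 => [|a /negbTE a_neq].
  by rewrite addr0 mulr_sumr; apply: eq_bigr => b _; rewrite eqxx mul1r mulrA.
by rewrite big1 // => b _; rewrite eq_sym a_neq mul0r mulr0.
Qed.

Lemma Epair_delta_snd (j : I) (h : I -> I -> R) :
  Epair (fun a b => (j == b)%:R * h a b) = q j * \sum_a q a * h a j.
Proof.
rewrite /Epair exchange_big (bigD1 j) //= [X in _ + X]big1 => [|b /negbTE b_neq].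
  by rewrite addr0 mulr_sumr; apply: eq_bigr => a _; rewrite eqxx mul1r mulrA [q a * _]mulrC.
by rewrite big1 // => a _; rewrite eq_sym b_neq mul0r mulr0.
Qed.

Hypotheses (q_ge0 : forall i, 0 <= q i) (q_sum1 : \sum_i q i = 1).

Lemma Epair_cst (c : R) : Epair (fun _ _ => c) = c.
Proof.
rewrite /Epair -[RHS]mul1r -{1}q_sum1 mulr_suml; apply: eq_bigr => a _.
by rewrite -mulr_suml -mulr_sumr q_sum1 mulr1.
Qed.

Lemma Epair_le (f g : I -> I -> R) : (forall a b, f a b <= g a b) -> Epair f <= Epair g.
Proof.
move=> fg; apply: ler_sum => a _; apply: ler_sum => b _.
by apply: ler_wpM2l; [exact: mulr_ge0 | exact: fg].
Qed.

Lemma Epair_mean2 (u : I -> R) : Epair (fun a b => (u a + u b) / 2) = \sum_i q i * u i.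
Proof.
have fst : Epair (fun a _ => u a) = \sum_i q i * u i.
  by apply: eq_bigr => a _; rewrite -mulr_suml -mulr_sumr q_sum1 mulr1.
have snd : Epair (fun _ b => u b) = \sum_i q i * u i.
  rewrite /Epair exchange_big; apply: eq_bigr => b _ /=.
  by rewrite -mulr_suml -mulr_suml q_sum1 mul1r.
have -> : Epair (fun a b => (u a + u b) / 2) =
          2^-1 * (Epair (fun a _ => u a) + Epair (fun _ b => u b)).
  by rewrite -EpairD -EpairZ; apply: eq_bigr => a _; apply: eq_bigr => b _; rewrite [_ / 2]mulrC.
rewrite fst snd; lra.
Qed.

Lemma sum_pair_mulD (u : I -> R) :
  \sum_a \sum_b (u a + u b) * (q a + q b) = 2 * (#|I|%:R * \sum_i q i * u i + \sum_i u i).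
Proof.
rewrite (eq_bigr (fun a => (q a * u a) *+ #|I| + \sum_b q b * u b
                           + u a * \sum_b q b + q a * \sum_b u b)).
  rewrite !big_split /= sumrMnl sumr_const -[#|xpredT|]/#|I|.
  by rewrite -!mulr_suml q_sum1 mul1r mulr1 -mulr_natl; ring.
move=> a _; rewrite (eq_bigr (fun b => q a * u a + q b * u b + u a * q b + q a * u b)) => [|b _].
  by rewrite !big_split /= sumr_const -!mulr_sumr.
ring.
Qed.

End PairExpectation.

Section REX3.
Variables (R : realType) (K T : nat) (gamma : R) (x : nat -> 'I_K -> R).
Hypotheses (K_ge2 : (2 <= K)%N) (gamma_gt0 : 0 < gamma) (gamma_lt_half : gamma < 1 / 2).
Hypothesis x01 : forall t i, (t < T)%N -> 0 <= x t i <= 1.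

Local Notation eta := (gamma / K%:R).
Local Notation p := (rex3_p gamma).
Local Notation upd t := (rex3_update gamma (x t)).

Definition weights_pos (w : 'I_K -> R) := forall i, 0 < w i.

Definition round_gain (w : 'I_K -> R) (t : nat) : R := \sum_i p w i * x t i.

Definition gain_est (w : 'I_K -> R) (t : nat) (a b i : 'I_K) : R :=
  ((i == a)%:R - (i == b)%:R) * ((x t a - x t b) / (2 * p w i)).

Lemma card_arms_gt0 : (0 < #|'I_K|)%N.
Proof. by rewrite card_ord (leq_trans _ K_ge2). Qed.

Lemma K_gt0 : 0 < K%:R :> R.
Proof. by rewrite ltr0n -[K in (0 < K)%N]card_ord card_arms_gt0. Qed.

Lemma eta_gt0 : 0 < eta.
Proof. exact: divr_gt0 gamma_gt0 K_gt0. Qed.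

Lemma one_minus_gamma_gt0 : 0 < 1 - gamma.
Proof. by have := gamma_lt_half; lra. Qed.

Lemma rex3_updateE w t a b i : upd t w a b i = w i * expR (eta * gain_est w t a b i).
Proof.
rewrite /rex3_update /gain_est; case: (eqVneq a b) => [->|a_neq_b].
  by rewrite subrr mul0r mulr0 expR0 mulr1.
case: (eqVneq i a) => [->|i_neq_a]; first by rewrite (negbTE a_neq_b) subr0 mul1r.
case: (eqVneq i b) => [->|i_neq_b]; first by rewrite sub0r mulN1r mulrN.
by rewrite subrr mul0r mulr0 expR0 mulr1.
Qed.

Section Round.
Variables (w : 'I_K -> R) (t : nat).
Hypothesis w_pos : weights_pos w.

Lemma sum_weights_gt0 : 0 < \sum_i w i.
Proof. exact: sumr_pos_gt0 card_arms_gt0 w_pos. Qed.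

Lemma rex3_p_ge_eta i : eta <= p w i.
Proof.
have share_ge0 : 0 <= w i / \sum_j w j by rewrite divr_ge0 // ltW // sum_weights_gt0.
by rewrite /rex3_p lerDr mulr_ge0 // ltW // one_minus_gamma_gt0.
Qed.

Lemma rex3_p_gt0 i : 0 < p w i.
Proof. exact: lt_le_trans eta_gt0 (rex3_p_ge_eta i). Qed.

Lemma rex3_p_ge0 i : 0 <= p w i.
Proof. exact/ltW/rex3_p_gt0. Qed.

Lemma sum_rex3_p : \sum_i p w i = 1.
Proof.
rewrite big_split /= -(mulr_sumr _ _ _ (1 - gamma)) -(mulr_suml _ _ _ (\sum_j w j)^-1).
rewrite divff ?gt_eqF ?sum_weights_gt0 //.
by rewrite sumr_const card_ord -[gamma / _ *+ K]mulr_natr divfK ?gt_eqF ?K_gt0 // mulr1 subrK.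
Qed.

Lemma weight_share i : w i / \sum_j w j = (p w i - eta) / (1 - gamma).
Proof. by rewrite /rex3_p addrK [RHS]mulrC mulKf // gt_eqF // one_minus_gamma_gt0. Qed.

Lemma weights_pos_update a b : weights_pos (upd t w a b).
Proof. by move=> i; rewrite rex3_updateE mulr_gt0 ?expR_gt0. Qed.

Lemma ln_update a b i : ln (upd t w a b i) = ln (w i) + eta * gain_est w t a b i.
Proof. by rewrite rex3_updateE lnM ?posrE ?expR_gt0 // expRK. Qed.

Lemma gain_est_mean j : Epair (p w) (fun a b => gain_est w t a b j) = x t j - round_gain w t.
Proof.
set h := fun a b => (x t a - x t b) / (2 * p w j).
have -> : Epair (p w) (fun a b => gain_est w t a b j) =
    Epair (p w) (fun a b => (j == a)%:R * h a b) - Epair (p w) (fun a b => (j == b)%:R * h a b).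
  by rewrite -EpairB; apply: eq_bigr => a _; apply: eq_bigr => b _; rewrite /gain_est mulrBl.
rewrite Epair_delta_fst Epair_delta_snd /h !mulr_sumr.
have pj_neq0 : p w j != 0 by rewrite gt_eqF ?rex3_p_gt0.
rewrite (eq_bigr (fun b => (p w b * x t j - p w b * x t b) / 2)) => [|b _]; last by field.
rewrite [X in _ - X](eq_bigr (fun a => (p w a * x t a - p w a * x t j) / 2)) => [|a _];
  last by field.
rewrite -!mulr_suml !sumrB -!mulr_suml sum_rex3_p mul1r /round_gain; lra.
Qed.

Hypothesis xt01 : forall i, 0 <= x t i <= 1.

Lemma gain_est_bound a b i : `|eta * gain_est w t a b i| <= 1 / 2.
Proof.
have delta_le1 : `|(i == a)%:R - (i == b)%:R : R| <= 1.
  by case: (i == a); case: (i == b);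
    rewrite /= ?mulr1n ?mulr0n ?subrr ?subr0 ?sub0r ?normrN ?normr1 ?normr0.
have ratio_le : `|eta * ((x t a - x t b) / (2 * p w i))| <= 1 / 2.
  move: (xt01 a) (xt01 b) (rex3_p_ge_eta i) eta_gt0 => /andP[xa0 xa1] /andP[xb0 xb1] p_ge eta_pos.
  have p2_gt0 : 0 < 2 * p w i by rewrite mulr_gt0 ?rex3_p_gt0.
  rewrite mulrA ler_norml; apply/andP; split; [rewrite ler_pdivlMr | rewrite ler_pdivrMr]; nra.
rewrite /gain_est mulrCA normrM -[1 / 2]mul1r.
by apply: ler_pM; rewrite ?normr_ge0.
Qed.

Lemma sum_gain_est_sq_le a b :
  \sum_i p w i * gain_est w t a b i ^+ 2 <= (x t a - x t b) ^+ 2 / 4 * ((p w a)^-1 + (p w b)^-1).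
Proof.
set F := fun i => p w i * ((x t a - x t b) / (2 * p w i)) ^+ 2.
have pointwise i : p w i * gain_est w t a b i ^+ 2 <= (i == a)%:R * F i + (i == b)%:R * F i.
  rewrite /gain_est exprMn mulrCA -mulrDl; apply: ler_wpM2r.
    by rewrite mulr_ge0 ?sqr_ge0 ?rex3_p_ge0.
  by case: (i == a); case: (i == b); rewrite /= ?mulr1n ?mulr0n; lra.
apply: le_trans (ler_sum _ (fun i _ => pointwise i)) _.
rewrite big_split /= !sumr_delta /F.
have [pa_gt0 pb_gt0] := (rex3_p_gt0 a, rex3_p_gt0 b).
by rewrite le_eqVlt; apply/orP; left; apply/eqP; field; rewrite !gt_eqF.
Qed.

Lemma Epair_sum_gain_est_sq_le :
  Epair (p w) (fun a b => \sum_i p w i * gain_est w t a b i ^+ 2) <=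
  (K%:R * round_gain w t + \sum_i x t i) / 2.
Proof.
apply: le_trans (Epair_le rex3_p_ge0 sum_gain_est_sq_le) _.
apply: (@le_trans _ _ (\sum_a \sum_b (x t a + x t b) * (p w a + p w b) / 4)).
  apply: ler_sum => a _; apply: ler_sum => b _.
  move: (xt01 a) (xt01 b) => /andP[xa0 xa1] /andP[xb0 xb1].
  have [pa_gt0 pb_gt0] := (rex3_p_gt0 a, rex3_p_gt0 b).
  have -> : p w a * p w b * ((x t a - x t b) ^+ 2 / 4 * ((p w a)^-1 + (p w b)^-1)) =
            (x t a - x t b) ^+ 2 * (p w a + p w b) / 4 by field; rewrite !gt_eqF.
  by rewrite ler_pM2r // ler_pM2r ?(addr_gt0 pa_gt0 pb_gt0) // expr2; nra.
rewrite -(eq_bigr _ (fun a _ => mulr_suml _ _ _ 4^-1)) -mulr_suml.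
rewrite (sum_pair_mulD sum_rex3_p) card_ord /round_gain; lra.
Qed.

Lemma ln_sum_update_le a b :
  ln (\sum_i upd t w a b i) <= ln (\sum_i w i) + (1 - gamma)^-1 *
    (eta * \sum_i (p w i - eta) * gain_est w t a b i
     + 5 / 8 * eta ^+ 2 * \sum_i p w i * gain_est w t a b i ^+ 2).
Proof.
set W := \sum_i w i; set z := fun i => eta * gain_est w t a b i.
have W_gt0 : 0 < W := sum_weights_gt0.
have W'_gt0 : 0 < \sum_i upd t w a b i := sumr_pos_gt0 card_arms_gt0 (weights_pos_update a b).
have ln_ratio : ln (\sum_i upd t w a b i) <= ln W + ((\sum_i upd t w a b i) / W - 1).
  by have := ln_le_subr1 (divr_gt0 W'_gt0 W_gt0); rewrite ln_div ?posrE //; lra.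
have ratioE : (\sum_i upd t w a b i) / W - 1 = \sum_i w i / W * (expR (z i) - 1).
  rewrite [RHS](eq_bigr (fun i => upd t w a b i / W - w i / W)) => [|i _];
    last by rewrite rex3_updateE; ring.
  by rewrite sumrB -!mulr_suml divff ?gt_eqF.
have term i : w i / W * (expR (z i) - 1) <= (1 - gamma)^-1 *
    (eta * ((p w i - eta) * gain_est w t a b i)
     + 5 / 8 * eta ^+ 2 * (p w i * gain_est w t a b i ^+ 2)).
  have p_eta_ge0 : 0 <= p w i - eta by rewrite subr_ge0 rex3_p_ge_eta.
  have expR_z := expR_le_quad (gain_est_bound a b i).
  rewrite weight_share mulrAC mulrC; apply: ler_wpM2l.
    by rewrite invr_ge0 ltW ?one_minus_gamma_gt0.
  apply: (@le_trans _ _ ((p w i - eta) * (z i + 5 / 8 * z i ^+ 2))).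
    by apply: ler_wpM2l => //; rewrite /z; lra.
  have : 0 <= eta ^+ 3 * gain_est w t a b i ^+ 2.
    by rewrite mulr_ge0 ?sqr_ge0 ?exprn_ge0 ?ltW ?eta_gt0.
  by rewrite /z exprMn; lra.
rewrite ratioE in ln_ratio; apply: le_trans ln_ratio _; rewrite lerD2l.
by apply: le_trans (ler_sum _ (fun i _ => term i)) _; rewrite -mulr_sumr big_split /= -!mulr_sumr.
Qed.

Lemma Epair_ln_sum_update_le :
  Epair (p w) (fun a b => ln (\sum_i upd t w a b i)) <= ln (\sum_i w i) +
    (1 - gamma)^-1 * eta ^+ 2 *
      ((1 + 5 / 16) * K%:R * round_gain w t - (1 - 5 / 16) * \sum_i x t i).
Proof.
apply: le_trans (Epair_le rex3_p_ge0 ln_sum_update_le) _.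
rewrite EpairD (Epair_cst sum_rex3_p) EpairZ EpairD !EpairZ Epair_sum lerD2l -[X in _ <= X]mulrA.
apply: ler_wpM2l; first by rewrite invr_ge0 ltW ?one_minus_gamma_gt0.
have drift : \sum_i Epair (p w) (fun a b => (p w i - eta) * gain_est w t a b i) =
             eta * (K%:R * round_gain w t - \sum_i x t i).
  under eq_bigr do rewrite EpairZ gain_est_mean.
  rewrite (eq_bigr (fun i => p w i * x t i - round_gain w t * p w i
                             - eta * x t i + eta * round_gain w t)).
    rewrite !big_split /= !sumrN -!mulr_sumr sum_rex3_p sumr_const card_ord -/(round_gain w t).
    by rewrite -[round_gain w t *+ K]mulr_natr; ring.
  by move=> i _; ring.
have sq_le := ler_wpM2l (_ : 0 <= 5 / 8 * eta ^+ 2) Epair_sum_gain_est_sq_le.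
rewrite drift; apply: le_trans (lerD (lexx _) (sq_le _)) _; first by rewrite mulr_ge0 ?sqr_ge0.
lra.
Qed.

End Round.

Fixpoint Eweights (f : ('I_K -> R) -> R) (n t : nat) (w : 'I_K -> R) : R :=
  if n is n'.+1 then Epair (p w) (fun a b => Eweights f n' t.+1 (upd t w a b)) else f w.

Lemma Eweights_le (f g : ('I_K -> R) -> R) n t w :
  (forall v, weights_pos v -> f v <= g v) -> weights_pos w -> Eweights f n t w <= Eweights g n t w.
Proof.
move=> fg; elim: n t w => [|n IHn] t w w_pos /=; first exact: fg.
apply: (Epair_le (rex3_p_ge0 w_pos)) => a b.
exact/IHn/weights_pos_update.
Qed.

Lemma Eweights_cstD (c : R) (f : ('I_K -> R) -> R) n t w : weights_pos w ->
  Eweights (fun v => c + f v) n t w = c + Eweights f n t w.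
Proof.
elim: n t w => [|n IHn] t w w_pos //=.
rewrite -[X in _ = X + _](Epair_cst (sum_rex3_p w_pos) c) -EpairD.
by apply: eq_bigr => a _; apply: eq_bigr => b _; rewrite IHn //; apply: weights_pos_update.
Qed.

Lemma EweightsZ (k : R) (f : ('I_K -> R) -> R) n t w :
  Eweights (fun v => k * f v) n t w = k * Eweights f n t w.
Proof.
elim: n t w => [|n IHn] t w //=; rewrite -EpairZ.
by apply: eq_bigr => a _; apply: eq_bigr => b _; rewrite IHn.
Qed.

Lemma Eweights_sum (F : 'I_K -> ('I_K -> R) -> R) n t w :
  Eweights (fun v => \sum_j F j v) n t w = \sum_j Eweights (F j) n t w.
Proof.
elim: n t w => [|n IHn] t w //=; rewrite -Epair_sum.
by apply: eq_bigr => a _; apply: eq_bigr => b _; rewrite IHn.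
Qed.

Definition cum_gain (j : 'I_K) (n t : nat) : R := \sum_(r < n) x (t + r) j.

Definition cum_total (n t : nat) : R := \sum_(r < n) \sum_i x (t + r) i.

Lemma cum_gainS j n t : cum_gain j n.+1 t = x t j + cum_gain j n t.+1.
Proof.
rewrite /cum_gain big_ord_recl addn0; congr (_ + _).
by apply: eq_bigr => r _; rewrite lift0 addSnnS.
Qed.

Lemma cum_totalS n t : cum_total n.+1 t = \sum_i x t i + cum_total n t.+1.
Proof.
rewrite /cum_total big_ord_recl addn0; congr (_ + _).
by apply: eq_bigr => r _; rewrite lift0 addSnnS.
Qed.

Lemma rex3_EGS n t w : weights_pos w -> rex3_EG gamma x n.+1 t w =
  round_gain w t + Epair (p w) (fun a b => rex3_EG gamma x n t.+1 (upd t w a b)).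
Proof.
move=> w_pos; rewrite /round_gain -(Epair_mean2 (sum_rex3_p w_pos)) -EpairD.
by apply: eq_bigr => a _; apply: eq_bigr => b _.
Qed.

Lemma rex3_EG_ge0 n t w : (t + n <= T)%N -> weights_pos w -> 0 <= rex3_EG gamma x n t w.
Proof.
elim: n t w => [|n IHn] t w tn_le w_pos //; rewrite rex3_EGS //.
have xt01 i : 0 <= x t i <= 1 by apply: x01; rewrite (leq_trans _ tn_le) // addnS ltnS leq_addr.
apply: addr_ge0.
  by apply: sumr_ge0 => i _; rewrite mulr_ge0 ?rex3_p_ge0 //; case/andP: (xt01 i).
rewrite -(Epair_cst (sum_rex3_p w_pos) 0); apply: (Epair_le (rex3_p_ge0 w_pos)) => a b.
by apply: IHn; [rewrite addSnnS | apply: weights_pos_update].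
Qed.

Lemma Eweights_ln_weight j n t w : weights_pos w ->
  Eweights (fun v => ln (v j)) n t w = ln (w j) + eta * (cum_gain j n t - rex3_EG gamma x n t w).
Proof.
elim: n t w => [|n IHn] t w w_pos; first by rewrite /= /cum_gain big_ord0 subrr mulr0 addr0.
rewrite rex3_EGS // cum_gainS /=.
have -> : Epair (p w) (fun a b => Eweights (fun v => ln (v j)) n t.+1 (upd t w a b)) =
    Epair (p w) (fun a b => ln (w j) + eta * gain_est w t a b j + eta * cum_gain j n t.+1
                            - eta * rex3_EG gamma x n t.+1 (upd t w a b)).
  apply: eq_bigr => a _; apply: eq_bigr => b _.
  by rewrite IHn; [rewrite ln_update //; ring | apply: weights_pos_update].
by rewrite EpairB !EpairD !(Epair_cst (sum_rex3_p w_pos)) !EpairZ gain_est_mean //; ring.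
Qed.

Lemma Eweights_ln_sum_le n t w : (t + n <= T)%N -> weights_pos w ->
  Eweights (fun v => ln (\sum_i v i)) n t w <= ln (\sum_i w i) + (1 - gamma)^-1 * eta ^+ 2 *
    ((1 + 5 / 16) * K%:R * rex3_EG gamma x n t w - (1 - 5 / 16) * cum_total n t).
Proof.
elim: n t w => [|n IHn] t w tn_le w_pos.
  by rewrite /= /cum_total big_ord0 !mulr0 subr0 mulr0 addr0.
rewrite rex3_EGS // cum_totalS /=.
have xt01 i : 0 <= x t i <= 1 by apply: x01; rewrite (leq_trans _ tn_le) // addnS ltnS leq_addr.
have tn_le' : (t.+1 + n <= T)%N by rewrite addSnnS.
have IH_update (a b : 'I_K) := IHn _ _ tn_le' (weights_pos_update t w_pos a b).
apply: le_trans (Epair_le (rex3_p_ge0 w_pos) IH_update) _.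
rewrite EpairD EpairZ EpairB (Epair_cst (sum_rex3_p w_pos)) EpairZ.
have := Epair_ln_sum_update_le w_pos xt01; lra.
Qed.



Local Notation w1 := (fun _ : 'I_K => 1 : R).
Local Notation G := (EG_alg gamma x T).
Local Notation U := (EG_unif x T).
Local Notation second_order := (gamma / (1 - gamma) * ((1 + 5 / 16) * G - (1 - 5 / 16) * U)).

Lemma weights_pos1 : weights_pos w1.
Proof. by move=> i; rewrite ltr01. Qed.

Lemma ln_sum_ge_mean_ln (v : 'I_K -> R) : weights_pos v ->
  ln K%:R + K%:R^-1 * \sum_j ln (v j) <= ln (\sum_i v i).
Proof.
move=> v_pos; have := sum_ln_le_ln_mean card_arms_gt0 v_pos.
rewrite card_ord ln_div ?posrE ?K_gt0 ?sumr_pos_gt0 ?card_arms_gt0 // => sum_le.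
have K_inv_gt0 : 0 < K%:R^-1 :> R by rewrite invr_gt0 K_gt0.
have := ler_wpM2l (ltW K_inv_gt0) sum_le; rewrite mulKf ?gt_eqF ?K_gt0 //; lra.
Qed.

Lemma EG_unifE : U = K%:R^-1 * cum_total T 0.
Proof. by rewrite /EG_unif /cum_total; under [in RHS]eq_bigr do rewrite add0n. Qed.

Lemma cum_gain0 j : cum_gain j T 0 = \sum_(t < T) x t j.
Proof. by rewrite /cum_gain; under eq_bigr do rewrite add0n. Qed.

Lemma EG_alg_ge0 : 0 <= G.
Proof. by apply: rex3_EG_ge0 weights_pos1; rewrite add0n. Qed.

Lemma EG_unif_ge0 : 0 <= U.
Proof.
rewrite /EG_unif mulr_ge0 ?invr_ge0 ?ler0n //.
by apply: sumr_ge0 => t _; apply: sumr_ge0 => i _; case/andP: (x01 i (ltn_ord t)).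
Qed.

Lemma Eweights_ln_sum_init_le :
  Eweights (fun v => ln (\sum_i v i)) T 0 w1 <= ln K%:R + eta * second_order.
Proof.
apply: le_trans (Eweights_ln_sum_le _ weights_pos1) _; first by rewrite add0n.
rewrite sumr_const card_ord EG_unifE -/(EG_alg gamma x T) lerD2l.
by rewrite le_eqVlt; apply/orP; left; apply/eqP; field; rewrite ?gt_eqF ?K_gt0 ?one_minus_gamma_gt0.
Qed.

Lemma best_arm_regret_le j : \sum_(t < T) x t j - G <= K%:R / gamma * ln K%:R + second_order.
Proof.
have ln_weight_le :
    Eweights (fun v => ln (v j)) T 0 w1 <= Eweights (fun v => ln (\sum_i v i)) T 0 w1.
  apply: Eweights_le weights_pos1 => v v_pos.
  rewrite ler_ln ?posrE ?v_pos ?sumr_pos_gt0 ?card_arms_gt0 // (bigD1 j) //= lerDl.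
  by apply: sumr_ge0 => i _; exact: ltW.
have := le_trans ln_weight_le Eweights_ln_sum_init_le.
rewrite Eweights_ln_weight ?weights_pos1 // ln1 add0r cum_gain0 => eta_regret_le.
rewrite -(ler_pM2l eta_gt0) [X in _ <= X]mulrDr; apply: (le_trans eta_regret_le).
by rewrite lerD2r le_eqVlt; apply/orP; left; apply/eqP; field; rewrite !gt_eqF ?K_gt0.
Qed.

(* Only used to show, in [regret_arith], that [second_order] is nonnegative. *)
Lemma uniform_regret_le : U - G <= second_order.
Proof.
have := le_trans (Eweights_le T 0 ln_sum_ge_mean_ln weights_pos1) Eweights_ln_sum_init_le.
rewrite Eweights_cstD ?weights_pos1 // EweightsZ Eweights_sum lerD2l.
under eq_bigr do rewrite Eweights_ln_weight ?weights_pos1 // ln1 add0r.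
rewrite -mulr_sumr sumrB /cum_gain exchange_big -/(cum_total T 0) sumr_const card_ord.
rewrite -[rex3_EG _ _ _ _ _ *+ K]mulr_natr => eta_regret_le.
rewrite EG_unifE -(ler_pM2l eta_gt0); apply: le_trans eta_regret_le.
by rewrite /EG_alg le_eqVlt; apply/orP; left; apply/eqP; field; rewrite gt_eqF ?K_gt0.
Qed.

End REX3.

Lemma regret_arith (R : realFieldType) (g e S G U L : R) :
  0 < g -> g < 1 / 2 -> 2 + 5 / 8 <= e -> 0 <= G -> 0 <= U ->
  S - G <= L + g / (1 - g) * ((1 + 5 / 16) * G - (1 - 5 / 16) * U) ->
  U - G <= g / (1 - g) * ((1 + 5 / 16) * G - (1 - 5 / 16) * U) ->
  S - G <= L + g * (e * G - (4 - e) * U).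
Proof.
move=> g_gt0 g_lt e_ge G_ge0 U_ge0; set Y := (1 + 5 / 16) * G - (1 - 5 / 16) * U.
move=> best_le unif_le.
have s_gt0 : 0 < g / (1 - g) by rewrite divr_gt0 //; lra.
have s_le : g / (1 - g) <= 2 * g.
  rewrite ler_pdivrMr; last lra.
  have : 0 <= g * (1 - 2 * g) by apply: mulr_ge0; lra.
  lra.
(* The second hypothesis forces [Y >= 0], so that [g / (1 - g) <= 2 g] can be used. *)
have Y_ge0 : 0 <= Y.
  rewrite leNgt; apply/negP => Y_lt0.
  have sY_lt0 : g / (1 - g) * Y < 0 by rewrite pmulr_rlt0.
  have : U < G by lra.
  by move: Y_lt0; rewrite /Y; lra.
have sY_le : g / (1 - g) * Y <= 2 * g * Y by exact: ler_wpM2r.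
have Y_le : 2 * Y <= e * G - (4 - e) * U.
  have e_gap : 0 <= e - (2 + 5 / 8) by lra.
  by have := mulr_ge0 e_gap (addr_ge0 G_ge0 U_ge0); rewrite /Y; lra.
have := ler_wpM2l (ltW g_gt0) Y_le; lra.
Qed.

Theorem theorem1 (R : realType) (K T : nat) (x : nat -> 'I_K -> R) (gamma : R) :
  (2 <= K)%N -> (1 <= T)%N ->
  (forall (t : nat) (i : 'I_K), (t < T)%N -> 0 <= x t i <= 1) ->
  0 < gamma -> gamma < 1 / 2 ->
  G_max x T - EG_alg gamma x T <=
    K%:R / gamma * ln K%:R
    + gamma * (expR 1 * EG_alg gamma x T - (4 - expR 1) * EG_unif x T).
Proof.
move=> K_ge2 _ x01 gamma_gt0 gamma_lt_half.
have regret_le j := regret_arith gamma_gt0 gamma_lt_half (expR1_ge R)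
  (EG_alg_ge0 K_ge2 gamma_gt0 gamma_lt_half x01) (EG_unif_ge0 x01)
  (best_arm_regret_le K_ge2 gamma_gt0 gamma_lt_half x01 j)
  (uniform_regret_le K_ge2 gamma_gt0 gamma_lt_half x01).
rewrite lerBlDl; apply: bigmax_le => [|j _]; last by have := regret_le j; lra.
pose j0 := Ordinal (ltnW K_ge2).
have := regret_le j0; have : 0 <= \sum_(t < T) x t j0.
  by apply: sumr_ge0 => t _; case/andP: (x01 _ j0 (ltn_ord t)).
lra.
Qed.
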